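(* Let $M$ be a gasket automaton satisfying the $\gamma$-isolated condition, let $(\tau,\kappa)\in\mathcal P_{\alpha\gamma}$ with $\kappa$ double-maximal in $M$, and let $M'$ be the one-step simplification of $M$ with respect to $(\tau,\kappa)$. Then (i) both $\tau$ and $\kappa$ are double-maximal in $M'$, and $\kappa$ is $\alpha\gamma$-isolated in $M'$; (ii) $\kappa\notin\{\alpha,\gamma\}$.
   Context: $\Sigma=\{1,\dots,N\}$. Triangle automaton: $\alpha,\beta,\gamma$ distinct elements of $\Sigma\cup\{-1,-2,-3\}$; states $S_{uv}$ ($u\ne v\in\{\alpha,\beta,\gamma\}$), $Id$, $Exit$; input alphabet $\Sigma^2$; transition $\delta$ with $\delta(Id,(i,j))=Id$ iff $i=j$; $\delta(Id,(i,j))=S_{uv}\Rightarrow\delta(Id,(j,i))=S_{vu}$; $\delta(S_{uv},(i,j))=S_{uv}$ if $(i,j)=(v,u)$, else $Exit$. $\mathcal P_{uv}=\{(i,j):\delta(Id,(i,j))=S_{uv}\}$; a triangle automaton is determined by $\mathcal P_{\alpha\beta},\mathcal P_{\alpha\gamma},\mathcal P_{\beta\gamma}$. $i\triangleleft_{uv}j$ iff $(i,j)\in\mathcal P_{uv}$ (iff $j\triangleleft_{vu}i$); $j$ is $uv$-minimal if no $i\triangleleft_{uv}j$, $uv$-maximal if no $j\triangleleft_{uv}k$, $uv$-isolated if both; double-maximal means $\alpha\gamma$-maximal and $\beta\gamma$-maximal. Gasket automaton: (Uniqueness) $i\triangleleft_{uv}j,i\triangleleft_{uv}j'\Rightarrow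 j=j'$; (Gathering) any two of $a\triangleleft_{\alpha\gamma}c$, $a\triangleleft_{\beta\gamma}b$, $b\triangleleft_{\alpha\beta}c$ imply the third; (Boundary) if $\alpha\in\Sigma$ it is $\alpha\gamma$- and $\alpha\beta$-minimal; if $\beta\in\Sigma$ it is $\beta\gamma$- and $\beta\alpha$-minimal; if $\gamma\in\Sigma$ it is $\gamma\alpha$- and $\gamma\beta$-minimal. $\gamma$-isolated condition: $\alpha,\beta,\gamma\in\Sigma$; $(\Sigma,\mathcal P_{\alpha\gamma}\cup\mathcal P_{\beta\gamma})$ has no directed cycle; $\gamma$ is $\alpha\gamma$-, $\beta\gamma$- and $\alpha\beta$-isolated. One-step simplification with respect to $(\tau,\kappa)\in\mathcal P_{\alpha\gamma}$: if $\kappa$ has no $\alpha\beta$-predecessor, $\mathcal P'_{\alpha\beta}=\mathcal P_{\alpha\beta}$, $\mathcal P'_{\alpha\gamma}=\mathcal P_{\alpha\gamma}\setminus\{(\tau,\kappa)\}$, $\mathcal P'_{\beta\gamma}=\mathcal P_{\beta\gamma}$; if $\lambda\triangleleft_{\alpha\beta}\kappa$, then $\mathcal P'_{\alpha\beta}=\mathcal P_{\alpha\beta}$, $\mathcal P'_{\alpha\gamma}=\mathcal P_{\alpha\gamma}\setminus\{(\tau,\kappa)\}$, $\mathcal P'_{\beta\gamma}=\mathcal P_{\beta\gamma}\setminus\{(\tau,\lambda)\}$. $M'$ is the triangle automaton determined by $\mathcal P'_{\alpha\beta},\mathcal P'_{\alpha\gamma},\mathcal P'_{\beta\gamma}$.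 *)

(* Labels are integers: Sigma = {1,...,N}, extra labels -1,-2,-3. *)
From mathcomp Require Import all_boot all_order all_algebra.
From Stdlib Require Import Relations.
Set Implicit Arguments. Unset Strict Implicit. Unset Printing Implicit Defensive.
Import Order.TTheory GRing.Theory Num.Theory.
Local Open Scope ring_scope.

Definition in_sigma (N : nat) (i : int) : bool := (1 <= i) && (i <= N%:Z).

Definition in_labels (N : nat) (x : int) : bool :=
  in_sigma N x || (x \in [:: -1; -2; -3]).

(* A triangle automaton, given by alpha, beta, gamma and the sets
   P_{alpha beta}, P_{alpha gamma}, P_{beta gamma} (as relations). *)
Record tri_aut := TriAut {
  t_alpha : int; t_beta : int; t_gamma : int;
  Pab : rel int; Pag : rel int; Pbg : rel int }.

(* The three letters alpha, beta, gamma (as indices of the states S_uv). *)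
Inductive letter := LA | LB | LC.

Definition letter_val (M : tri_aut) (u : letter) : int :=
  match u with LA => t_alpha M | LB => t_beta M | LC => t_gamma M end.

(* i <|_{uv} j  iff  (i,j) \in P_{uv};  P_{vu} is the transpose of P_{uv}. *)
Definition trel (M : tri_aut) (u v : letter) : rel int :=
  match u, v with
  | LA, LB => Pab M | LB, LA => fun i j => Pab M j i
  | LA, LC => Pag M | LC, LA => fun i j => Pag M j i
  | LB, LC => Pbg M | LC, LB => fun i j => Pbg M j i
  | _, _ => fun _ _ => false
  end.

(* Well-formedness: the data really define a triangle automaton, i.e. the
   transition delta(Id, .) on Sigma^2 is a well-defined function with
   delta(Id,(i,j)) = Id iff i = j. *)
Definition is_triangle (N : nat) (M : tri_aut) : Prop :=
  [/\ [/\ t_alpha M != t_beta M, t_alpha M != t_gamma M & t_beta M != t_gamma M],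
      [/\ in_labels N (t_alpha M), in_labels N (t_beta M) & in_labels N (t_gamma M)],
      (forall u v i j, trel M u v i j -> in_sigma N i /\ in_sigma N j),
      (forall u v i, ~~ trel M u v i i) &
      (forall u v u' v' i j, trel M u v i j -> trel M u' v' i j -> u = u' /\ v = v')].

Definition is_min (N : nat) (M : tri_aut) (u v : letter) (j : int) : Prop :=
  forall i, in_sigma N i -> ~~ trel M u v i j.
Definition is_max (N : nat) (M : tri_aut) (u v : letter) (j : int) : Prop :=
  forall k, in_sigma N k -> ~~ trel M u v j k.
Definition is_isolated (N : nat) (M : tri_aut) (u v : letter) (j : int) : Prop :=
  is_min N M u v j /\ is_max N M u v j.
Definition double_max (N : nat) (M : tri_aut) (j : int) : Prop :=
  is_max N M LA LC j /\ is_max N M LB LC j.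

Definition is_gasket (N : nat) (M : tri_aut) : Prop :=
  [/\ is_triangle N M,
      (* Uniqueness *)
      (forall u v i j j', trel M u v i j -> trel M u v i j' -> j = j'),
      (* Gathering *)
      (forall a b c, in_sigma N a -> in_sigma N b -> in_sigma N c ->
         [/\ (Pag M a c -> Pbg M a b -> Pab M b c),
             (Pag M a c -> Pab M b c -> Pbg M a b) &
             (Pbg M a b -> Pab M b c -> Pag M a c)]) &
      [/\ (in_sigma N (t_alpha M) ->
             is_min N M LA LC (t_alpha M) /\ is_min N M LA LB (t_alpha M)),
          (in_sigma N (t_beta M) ->
             is_min N M LB LC (t_beta M) /\ is_min N M LB LA (t_beta M)) &
          (in_sigma N (t_gamma M) ->
             is_min N M LC LA (t_gamma M) /\ is_min N M LC LB (t_gamma M))]].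

Definition gamma_isolated (N : nat) (M : tri_aut) : Prop :=
  [/\ [/\ in_sigma N (t_alpha M), in_sigma N (t_beta M) & in_sigma N (t_gamma M)],
      (forall i, in_sigma N i ->
         ~ clos_trans int (fun x y => in_sigma N x /\ in_sigma N y /\
                                      (Pag M x y || Pbg M x y)) i i),
      is_isolated N M LA LC (t_gamma M),
      is_isolated N M LB LC (t_gamma M) &
      is_isolated N M LA LB (t_gamma M)].

Definition simplify (M : tri_aut) (tau kappa : int) : tri_aut :=
  TriAut (t_alpha M) (t_beta M) (t_gamma M)
    (Pab M)
    (fun i j => Pag M i j && ~~ ((i == tau) && (j == kappa)))
    (fun i j => Pbg M i j && ~~ ((i == tau) && Pab M j kappa)).

(* Simplification only deletes arcs, so maximality survives it.
   The deleted arc (tau, kappa) is, by Uniqueness, the only alpha-gamma arc out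
   of tau and the only one into kappa; a beta-gamma arc tau -> b of M would by
   Gathering give b <|_ab kappa, so it is deleted as well.  Finally alpha and
   gamma are alpha-gamma-minimal while kappa has the predecessor tau. *)
From mathcomp Require Import all_boot all_order all_algebra.
Set Implicit Arguments. Unset Strict Implicit.
Import Order.TTheory GRing.Theory Num.Theory.
Local Open Scope ring_scope.

Section SimplifySubrelation.

Variables (N : nat) (M : tri_aut) (tau kappa : int).

Lemma trel_simplify u v i j :
  trel (simplify M tau kappa) u v i j -> trel M u v i j.
Proof. by case: u; case: v => //= /andP[]. Qed.

Lemma is_max_simplify u v j :
  is_max N M u v j -> is_max N (simplify M tau kappa) u v j.
Proof. by move=> maxj k Sk; apply: contra (maxj k Sk); apply: trel_simplify. Qed.

End SimplifySubrelation.

Lemma is_min_trel_neq N M u v x i j :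
  is_min N M u v x -> in_sigma N i -> trel M u v i j -> j <> x.
Proof. by move=> minx Si uvij jx; move: (minx i Si); rewrite -jx uvij. Qed.

Section SimplifyGasket.

Variables (N : nat) (M : tri_aut) (tau kappa : int).
Hypotheses (gasketM : is_gasket N M) (tau_kappa : Pag M tau kappa).

Lemma in_sigma_Pag_ends : in_sigma N tau /\ in_sigma N kappa.
Proof. by case: gasketM => -[_ _ Ssigma _ _] _ _ _; apply: (Ssigma LA LC). Qed.

Lemma simplify_max_ag_tau : is_max N (simplify M tau kappa) LA LC tau.
Proof.
case: gasketM => _ uniq _ _ k _ /=; apply/negP=> /andP[tau_k].
by rewrite (uniq LA LC tau k kappa tau_k tau_kappa) !eqxx.
Qed.

Lemma simplify_min_ag_kappa : is_min N (simplify M tau kappa) LA LC kappa.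
Proof.
case: gasketM => _ uniq _ _ i _ /=; apply/negP=> /andP[i_kappa].
by rewrite (uniq LC LA kappa i tau i_kappa tau_kappa) !eqxx.
Qed.

Lemma simplify_max_bg_tau : is_max N (simplify M tau kappa) LB LC tau.
Proof.
case: gasketM => -[_ _ Ssigma _ _] _ gather _ b _ /=.
apply/negP=> /andP[tau_b].
have [St Sb] := Ssigma LB LC tau b tau_b.
have [_ Sk] := in_sigma_Pag_ends.
have [b_kappa _ _] := gather tau b kappa St Sb Sk.
by rewrite eqxx (b_kappa tau_kappa tau_b).
Qed.

End SimplifyGasket.

Theorem lemma5p4 (N : nat) (M : tri_aut) (tau kappa : int) :
  is_gasket N M -> gamma_isolated N M ->
  Pag M tau kappa -> double_max N M kappa ->
  let M' := simplify M tau kappa in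
  ([/\ double_max N M' tau, double_max N M' kappa & is_isolated N M' LA LC kappa] /\
   (kappa <> t_alpha M /\ kappa <> t_gamma M)).
Proof.
move=> gasketM [[Salpha _ _] _ [min_gamma _] _ _] tau_kappa [max_ag max_bg] M'; rewrite {}/M'.
have [St _] := in_sigma_Pag_ends gasketM tau_kappa.
have [_ _ _ [/(_ Salpha) [min_alpha _] _ _]] := gasketM.
split; split.
- split; [exact: (simplify_max_ag_tau gasketM tau_kappa) |
         exact: (simplify_max_bg_tau gasketM tau_kappa)].
- by split; apply: is_max_simplify.
- by split; [exact: (simplify_min_ag_kappa gasketM tau_kappa) | apply: is_max_simplify].
- exact: (is_min_trel_neq (v := LC) min_alpha St tau_kappa).
- exact: (is_min_trel_neq (v := LC) min_gamma St tau_kappa).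
Qed.
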